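(* Let $\lambda>0$ and $f(z)=z+\sum_{k=2}^{\infty}a_kz^k$ analytic in $\mathbb{D}=\{z:|z|<1\}$. If $\sum_{k=2}^{\infty}(k-1)|a_k|<\lambda$, then $f\in\Omega_\lambda$. Moreover, for every $f(z)=z+\sum_{k=2}^\infty a_kz^k\in\Omega_\lambda$, $|a_k|\le\frac{\lambda}{k-1}$ for all $k\ge2$.
   Context: $\Omega_\lambda$ denotes the set of functions $f$ analytic in $\mathbb{D}$ with $f(0)=0$, $f'(0)=1$, such that $zf'(z)-f(z)=\lambda z^2\phi(z)$ for some analytic $\phi$ on $\mathbb{D}$ with $|\phi(z)|\le1$. *)

From Stdlib Require Import Reals.
From Coquelicot Require Import Coquelicot.

Definition inD (z : C) : Prop := Cmod z < 1.

Definition analytic_on_D (f : C -> C) : Prop :=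
  forall z, inD z -> ex_derive (K := C_AbsRing) (V := C_NormedModule) f z.

Definition has_expansion (f : C -> C) (a : nat -> C) : Prop :=
  forall z, inD z ->
    is_series (K := C_AbsRing) (V := C_NormedModule)
      (fun k => if (k <? 2)%nat then RtoC 0 else (a k * Cpow z k)%C) (f z - z)%C.

Definition Omega (lam : R) (f : C -> C) : Prop :=
  analytic_on_D f /\ f (RtoC 0) = RtoC 0 /\
  is_derive (K := C_AbsRing) (V := C_NormedModule) f (RtoC 0) (RtoC 1) /\
  exists phi : C -> C,
    analytic_on_D phi /\ (forall z, inD z -> Cmod (phi z) <= 1) /\
    forall z, inD z ->
      forall l : C, is_derive (K := C_AbsRing) (V := C_NormedModule) f z l ->
        (z * l - f z = RtoC lam * Cpow z 2 * phi z)%C.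

(* Term-by-term differentiation gives
   z f'(z) - f(z) = z^2 h(z) with h(z) = Σ_{n≥0} (n+1) a_{n+2} z^n.  If Σ (k-1)|a_k| < λ
   then |h| < λ on the disk, so φ := h/λ shows f ∈ Ω_λ.  Conversely, if f ∈ Ω_λ then h = λφ
   is bounded by λ on the punctured disk, and Cauchy's estimate gives (k-1)|a_k| r^(k-2) ≤ λ
   for all r < 1.  Cauchy's estimate is proved without integrals: averaging h(r ω^j) ω^(-jk)
   over the N-th roots of unity ω^j keeps the k-th coefficient and those of index ≥ N, and the
   latter contribute at most a tail of the convergent series Σ |c_n| r^n. *)

From Stdlib Require Import Reals Lra Lia Psatz ClassicalEpsilon.
From Coquelicot Require Import Coquelicot.

Open Scope R_scope.

Notation is_Cseries := (is_series (K := C_AbsRing) (V := C_NormedModule)).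
Notation is_C_derive := (is_derive (K := C_AbsRing) (V := C_NormedModule)).

(** * Complex series *)

Lemma is_Cseries_plus (a b : nat -> C) (la lb : C) :
  is_Cseries a la -> is_Cseries b lb -> is_Cseries (fun n => a n + b n)%C (la + lb)%C.
Proof. exact (is_series_plus a b la lb). Qed.

Lemma is_Cseries_minus (a b : nat -> C) (la lb : C) :
  is_Cseries a la -> is_Cseries b lb -> is_Cseries (fun n => a n - b n)%C (la - lb)%C.
Proof. exact (is_series_minus a b la lb). Qed.

Lemma is_Cseries_scal (c : C) (a : nat -> C) (l : C) :
  is_Cseries a l -> is_Cseries (fun n => c * a n)%C (c * l)%C.
Proof. exact (is_series_scal_l c a l). Qed.

Lemma is_Cseries_ext (a b : nat -> C) (la lb : C) :
  (forall n, a n = b n) -> la = lb -> is_Cseries a la -> is_Cseries b lb.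
Proof. intros Hab <-. apply is_series_ext, Hab. Qed.

Lemma is_Cseries_shift (a : nat -> C) (l : C) :
  is_Cseries a l -> is_Cseries (fun n => a (S n)) (l - a O)%C.
Proof.
  intro H. apply is_series_incr_1.
  match goal with |- is_series _ ?m => replace m with l by (change (l = l - a O + a O)%C; ring) end.
  exact H.
Qed.

Lemma is_Cseries_0 : is_Cseries (fun _ => RtoC 0) (RtoC 0).
Proof.
  apply filterlim_ext with (fun _ => RtoC 0); [| apply filterlim_const].
  induction x as [|n IH]; [now rewrite sum_O |].
  rewrite sum_Sn, <- IH. change (RtoC 0 = 0 + 0)%C. ring.
Qed.

Lemma is_Cseries_unique (a : nat -> C) (l1 l2 : C) :
  is_Cseries a l1 -> is_Cseries a l2 -> l1 = l2.
Proof. apply filterlim_locally_unique. Qed.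

Lemma Cmod_Cseries_le (a : nat -> C) (b : nat -> R) (la : C) (lb : R) :
  is_Cseries a la -> is_series b lb -> (forall n, Cmod (a n) <= b n) -> Cmod la <= lb.
Proof.
  intros Ha Hb Hab.
  assert (Hn : is_lim_seq (fun n => norm (sum_n a n)) (Cmod la)).
  { eapply filterlim_comp; [exact Ha | apply (filterlim_norm (K := C_AbsRing) (V := C_NormedModule))]. }
  refine (is_lim_seq_le (fun n => norm (sum_n a n)) (sum_n b) _ lb _ Hn Hb).
  intro n. eapply Rle_trans;
    [apply (norm_sum_n_m (K := C_AbsRing) (V := C_NormedModule) a 0 n) | apply sum_n_m_le, Hab].
Qed.

Lemma is_Cseries_terms_bounded (a : nat -> C) (l : C) :
  is_Cseries a l -> exists M, forall n, Cmod (a n) <= M.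
Proof.
  intro H. destruct (filterlim_bounded (K := C_AbsRing) (V := C_NormedModule) (sum_n a)) as [M HM].
  { exists l. exact H. }
  change (forall n, Cmod (sum_n a n) <= M) in HM.
  exists (2 * M). intros [|n].
  - pose proof (HM O) as H0. rewrite sum_O in H0. pose proof (Cmod_ge_0 (a O)). lra.
  - replace (a (S n)) with (sum_n a (S n) - sum_n a n)%C
      by (rewrite sum_Sn; change (plus ?x ?y) with (x + y)%C; ring).
    eapply Rle_trans; [apply Cmod_triangle |]. rewrite Cmod_opp.
    pose proof (HM (S n)). pose proof (HM n). lra.
Qed.

Lemma is_series_term_le (t : nat -> R) (s : R) (k : nat) :
  (forall n, 0 <= t n) -> is_series t s -> t k <= s.
Proof.
  intros Ht Hs. apply Rle_trans with (sum_f_R0 t k).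
  - destruct k as [|k]; simpl; [lra |]. pose proof (cond_pos_sum t k Ht). lra.
  - apply sum_incr; [apply is_series_Reals, Hs | exact Ht].
Qed.

(** * Power series *)

(* An arbitrary value when [a] is not summable. *)
Definition CSeries (a : nat -> C) : C := epsilon (inhabits (RtoC 0)) (is_Cseries a).

Lemma CSeries_unique (a : nat -> C) (l : C) : is_Cseries a l -> CSeries a = l.
Proof.
  intro H. apply (is_Cseries_unique a); [| exact H].
  unfold CSeries. apply epsilon_spec. exists l. exact H.
Qed.

Definition CPSeries (c : nat -> C) (z : C) : C := CSeries (fun n => c n * z ^ n)%C.

Definition bounded_coef (c : nat -> C) (rho : R) : Prop :=
  exists B, forall n, Cmod (c n) * rho ^ n <= B.

Lemma bounded_coef_of_is_Cseries (c : nat -> C) (z l : C) :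
  is_Cseries (fun n => c n * z ^ n)%C l -> bounded_coef c (Cmod z).
Proof.
  intro H. destruct (is_Cseries_terms_bounded _ _ H) as [B HB].
  exists B. intro n. rewrite <- Cmod_pow, <- Cmod_mult. apply HB.
Qed.

Lemma pow_scale_le (x rho r B : R) (n : nat) :
  0 < rho -> 0 <= r -> 0 <= x -> x * rho ^ n <= B -> x * r ^ n <= B * (r / rho) ^ n.
Proof.
  intros Hrho Hr Hx HB.
  assert (Hpow : 0 < rho ^ n) by (apply pow_lt; lra).
  replace (x * r ^ n) with (x * rho ^ n * (r / rho) ^ n)
    by (unfold Rdiv; rewrite Rpow_mult_distr, pow_inv; field; lra).
  apply Rmult_le_compat_r; [apply pow_le, Rdiv_le_0_compat |]; lra.
Qed.

Lemma ex_series_Cmod_pser (c : nat -> C) (rho r : R) :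
  bounded_coef c rho -> 0 <= r < rho -> ex_series (fun n => Cmod (c n) * r ^ n).
Proof.
  intros [B HB] Hr.
  apply (ex_series_le (K := R_AbsRing) (V := R_CompleteNormedModule))
    with (fun n => B * (r / rho) ^ n).
  - intro n. change (Rabs (Cmod (c n) * r ^ n) <= B * (r / rho) ^ n).
    rewrite Rabs_pos_eq by (apply Rmult_le_pos; [apply Cmod_ge_0 | apply pow_le; lra]).
    apply pow_scale_le; [lra | lra | apply Cmod_ge_0 | apply HB].
  - apply (ex_series_scal_l (K := R_AbsRing) (V := R_NormedModule)), ex_series_geom.
    rewrite Rabs_pos_eq by (apply Rdiv_le_0_compat; lra).
    apply (Rdiv_lt_1 r rho); lra.
Qed.

Lemma is_Cseries_CPSeries_abs (c : nat -> C) (z : C) :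
  ex_series (fun n => Cmod (c n) * Cmod z ^ n) -> is_Cseries (fun n => c n * z ^ n)%C (CPSeries c z).
Proof.
  intro Habs.
  destruct (ex_series_le (K := C_AbsRing) (V := C_CompleteNormedModule)
              (fun n => c n * z ^ n)%C (fun n => Cmod (c n) * Cmod z ^ n)) as [l Hl];
    [| exact Habs |].
  { intro n. change (Cmod (c n * z ^ n) <= Cmod (c n) * Cmod z ^ n).
    rewrite Cmod_mult, Cmod_pow. apply Rle_refl. }
  unfold CPSeries. rewrite (CSeries_unique _ l Hl). exact Hl.
Qed.

Lemma is_Cseries_CPSeries (c : nat -> C) (rho : R) (z : C) :
  bounded_coef c rho -> Cmod z < rho -> is_Cseries (fun n => c n * z ^ n)%C (CPSeries c z).
Proof.
  intros Hc Hz. apply is_Cseries_CPSeries_abs, ex_series_Cmod_pser with rho; [exact Hc |].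
  split; [apply Cmod_ge_0 | exact Hz].
Qed.

Lemma bounded_coef_of_is_series_Cmod (c : nat -> C) (s : R) :
  is_series (fun n => Cmod (c n)) s -> bounded_coef c 1.
Proof.
  intro Hs. exists s. intro n. rewrite pow1, Rmult_1_r.
  exact (is_series_term_le _ _ n (fun n => Cmod_ge_0 _) Hs).
Qed.

Lemma Cmod_CPSeries_le (c : nat -> C) (s : R) (z : C) :
  is_series (fun n => Cmod (c n)) s -> Cmod z < 1 -> Cmod (CPSeries c z) <= s.
Proof.
  intros Hs Hz. pose proof (Cmod_ge_0 z).
  apply (Cmod_Cseries_le _ _ _ _ (is_Cseries_CPSeries _ 1 z (bounded_coef_of_is_series_Cmod c s Hs) Hz) Hs).
  intro n. rewrite Cmod_mult, Cmod_pow. pose proof (Cmod_ge_0 (c n)).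
  assert (Cmod z ^ n <= 1) by (rewrite <- (pow1 n); apply pow_incr; lra).
  pose proof (pow_le _ n (Cmod_ge_0 z)). nra.
Qed.

Lemma CPSeries_0 (c : nat -> C) : c O = 0 -> CPSeries c 0 = 0.
Proof.
  intro Hc0. apply CSeries_unique.
  refine (is_Cseries_ext _ _ _ _ _ eq_refl is_Cseries_0).
  intros [|n]; simpl; [rewrite Hc0 |]; ring.
Qed.

Definition CPS_derive (c : nat -> C) (n : nat) : C := (INR (S n) * c (S n))%C.

Lemma ex_series_sq_geom (q : R) : 0 < q < 1 -> ex_series (fun n => (INR n + 1) ^ 2 * q ^ n).
Proof.
  intro Hq.
  assert (Hpos : forall n, 0 < (INR n + 1) ^ 2 * q ^ n).
  { intro n. pose proof (pos_INR n). apply Rmult_lt_0_compat; apply pow_lt; lra. }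
  apply ex_series_ext with (fun n => Rabs ((INR n + 1) ^ 2 * q ^ n)).
  { intro n. apply Rabs_pos_eq, Rlt_le, Hpos. }
  apply ex_series_DAlembert with q; [lra | intro n; apply Rgt_not_eq, Hpos |].
  assert (Hinv : is_lim_seq (fun n => / (INR n + 1)) 0).
  { apply is_lim_seq_ext with (fun n => / INR (S n)); [intro n; now rewrite S_INR |].
    apply (is_lim_seq_incr_1 (fun n => / INR n)).
    replace (Finite 0) with (Rbar_inv p_infty) by reflexivity.
    apply is_lim_seq_inv; [apply is_lim_seq_INR | discriminate]. }
  apply is_lim_seq_ext with (fun n => q * (1 + / (INR n + 1)) ^ 2).
  { intro n. pose proof (Hpos n). pose proof (pos_INR n).
    rewrite Rabs_pos_eq by (apply Rlt_le, Rdiv_lt_0_compat; auto).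
    rewrite S_INR. simpl. field. split; [apply pow_nonzero |]; lra. }
  replace (Finite q) with (Finite (q * (1 + 0) ^ 2)) by (f_equal; ring).
  apply (is_lim_seq_continuous (fun x => q * (1 + x) ^ 2)); [reg | exact Hinv].
Qed.

Lemma ex_series_derive_majorant (c : nat -> C) (rho r : R) :
  bounded_coef c rho -> 0 < r < rho ->
  ex_series (fun n => (INR n + 1) ^ 2 * (Cmod (c (S n)) * r ^ n)).
Proof.
  intros [B HB] Hr.
  apply (ex_series_le (K := R_AbsRing) (V := R_CompleteNormedModule))
    with (fun n => B / rho * ((INR n + 1) ^ 2 * (r / rho) ^ n)).
  - intro n. change (Rabs ((INR n + 1) ^ 2 * (Cmod (c (S n)) * r ^ n))
                     <= B / rho * ((INR n + 1) ^ 2 * (r / rho) ^ n)).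
    pose proof (pos_INR n). pose proof (Cmod_ge_0 (c (S n))).
    rewrite Rabs_pos_eq by (apply Rmult_le_pos; [apply pow_le | apply Rmult_le_pos; [| apply pow_le]]; lra).
    assert (Hc : Cmod (c (S n)) * r ^ S n <= B * (r / rho) ^ S n)
      by (apply pow_scale_le; [lra | lra | apply Cmod_ge_0 | apply HB]).
    assert (Hc' : Cmod (c (S n)) * r ^ n <= B / rho * (r / rho) ^ n).
    { simpl in Hc. apply Rmult_le_reg_l with r; [lra |].
      replace (r * (B / rho * (r / rho) ^ n)) with (B * (r / rho * (r / rho) ^ n)) by (field; lra).
      lra. }
    replace (B / rho * ((INR n + 1) ^ 2 * (r / rho) ^ n))
      with ((INR n + 1) ^ 2 * (B / rho * (r / rho) ^ n)) by ring.
    apply Rmult_le_compat_l; [apply pow_le; lra | exact Hc'].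
  - apply (ex_series_scal_l (K := R_AbsRing) (V := R_NormedModule)), ex_series_sq_geom.
    split; [apply Rdiv_lt_0_compat | apply (Rdiv_lt_1 r rho)]; lra.
Qed.

Lemma bounded_coef_CPS_derive (c : nat -> C) (rho r : R) :
  bounded_coef c rho -> 0 < r < rho -> bounded_coef (CPS_derive c) r.
Proof.
  intros Hc Hr. destruct (ex_series_derive_majorant c rho r Hc Hr) as [T HT].
  assert (Hnonneg : forall n, 0 <= (INR n + 1) ^ 2 * (Cmod (c (S n)) * r ^ n)).
  { intro n. pose proof (pos_INR n). pose proof (Cmod_ge_0 (c (S n))).
    apply Rmult_le_pos; [apply pow_le | apply Rmult_le_pos; [| apply pow_le]]; lra. }
  exists T. intro n. eapply Rle_trans; [| exact (is_series_term_le _ _ n Hnonneg HT)].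
  unfold CPS_derive. rewrite Cmod_mult, Cmod_R, Rabs_pos_eq, S_INR by apply pos_INR.
  pose proof (pos_INR n). pose proof (Hnonneg n).
  assert (0 <= Cmod (c (S n)) * r ^ n) by (apply Rmult_le_pos; [apply Cmod_ge_0 | apply pow_le; lra]).
  nra.
Qed.

Lemma is_Cseries_CPS_derive (c : nat -> C) (rho : R) (z : C) :
  bounded_coef c rho -> Cmod z < rho ->
  is_Cseries (fun n => CPS_derive c n * z ^ n)%C (CPSeries (CPS_derive c) z).
Proof.
  intros Hc Hz. pose proof (Cmod_ge_0 z).
  apply is_Cseries_CPSeries with ((Cmod z + rho) / 2); [| lra].
  apply bounded_coef_CPS_derive with rho; [exact Hc | lra].
Qed.

Lemma Cpow_remainder_le (w z : C) (r : R) (n : nat) :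
  Cmod w <= r -> Cmod z <= r ->
  r * Cmod (w ^ S n - z ^ S n - INR (S n) * (w - z) * z ^ n)
    <= (INR n + 1) ^ 2 * Cmod (w - z) ^ 2 * r ^ n.
Proof.
  intros Hw Hz. set (D := Cmod (w - z)).
  assert (HD : 0 <= D) by apply Cmod_ge_0.
  assert (Hz0 : 0 <= Cmod z) by apply Cmod_ge_0.
  induction n as [|n IH].
  - replace (w ^ 1 - z ^ 1 - INR 1 * (w - z) * z ^ 0)%C with (RtoC 0) by (simpl; ring).
    rewrite Cmod_0. simpl. nra.
  - set (E := (w ^ S n - z ^ S n - INR (S n) * (w - z) * z ^ n)%C) in IH.
    replace (w ^ S (S n) - z ^ S (S n) - INR (S (S n)) * (w - z) * z ^ S n)%C
      with (w * E + INR (S n) * (w - z) ^ 2 * z ^ n)%C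
      by (unfold E; rewrite (S_INR (S n)), RtoC_plus; simpl; ring).
    pose proof (Cmod_triangle (w * E) (INR (S n) * (w - z) ^ 2 * z ^ n)) as Htri.
    rewrite !Cmod_mult, !Cmod_pow, Cmod_R, Rabs_pos_eq in Htri by apply pos_INR.
    fold D in Htri. rewrite S_INR in *.
    pose proof (pos_INR n). pose proof (Cmod_ge_0 E).
    assert (Hzn : Cmod z ^ n <= r ^ n) by (apply pow_incr; lra).
    assert (Hrn : 0 <= r ^ n) by (apply pow_le; lra).
    assert (HwE : r * (Cmod w * Cmod E) <= r * ((INR n + 1) ^ 2 * D ^ 2 * r ^ n)).
    { apply Rmult_le_compat_l; [lra |]. apply Rle_trans with (r * Cmod E); [| exact IH].
      apply Rmult_le_compat_r; lra. }
    assert (Hzr : (INR n + 1) * D ^ 2 * Cmod z ^ n <= (INR n + 1) * D ^ 2 * r ^ n)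
      by (apply Rmult_le_compat_l; [apply Rmult_le_pos; [| apply pow_le]|]; lra).
    assert (Hsq : 0 <= D ^ 2 * r ^ n * r)
      by (apply Rmult_le_pos; [apply Rmult_le_pos; [apply pow_le |] |]; lra).
    simpl pow. simpl pow in HwE, Hzr, Hsq, Htri. nra.
Qed.

Lemma is_C_derive_quadratic (f : C -> C) (z l : C) (d K : R) :
  0 < d ->
  (forall w, Cmod (w - z) < d -> Cmod (f w - f z - (w - z) * l) <= K * Cmod (w - z) ^ 2) ->
  is_C_derive f z l.
Proof.
  intros Hd H. split; [apply (is_linear_scal_l (K := C_AbsRing) (V := C_NormedModule)) |].
  intros x Hx eps.
  assert (Hzx : z = x)
    by exact (is_filter_lim_locally_unique (K := C_AbsRing) (V := AbsRing_NormedModule C_AbsRing) _ _ Hx).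
  subst x. pose proof (Rabs_pos K) as HK. pose proof (cond_pos eps) as Heps.
  apply (locally_le_locally_norm (K := C_AbsRing) (V := AbsRing_NormedModule C_AbsRing)).
  assert (Hdelta : 0 < Rmin d (eps / (Rabs K + 1)))
    by (apply Rmin_glb_lt; [lra | apply Rdiv_lt_0_compat; lra]).
  exists (mkposreal _ Hdelta). intros w Hw.
  change (Cmod (w - z) < Rmin d (eps / (Rabs K + 1))) in Hw.
  change (Cmod (f w - f z - (w - z) * l) <= eps * Cmod (w - z)).
  pose proof (Rmin_l d (eps / (Rabs K + 1))). pose proof (Rmin_r d (eps / (Rabs K + 1))).
  set (D := Cmod (w - z)) in *. assert (HD : 0 <= D) by apply Cmod_ge_0.
  assert (Hsmall : (Rabs K + 1) * D <= eps).
  { apply Rmult_le_reg_l with (/ (Rabs K + 1)); [apply Rinv_0_lt_compat; lra |].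
    rewrite <- Rmult_assoc, Rinv_l by lra. unfold Rdiv in *. lra. }
  assert (HKD : K * D ^ 2 <= Rabs K * D ^ 2)
    by (apply Rmult_le_compat_r; [apply pow2_ge_0 | apply Rle_abs]).
  eapply Rle_trans; [apply H; fold D; lra | fold D]. simpl in HKD |- *. nra.
Qed.

Lemma is_C_derive_id (z : C) : is_C_derive (fun t => t) z (RtoC 1).
Proof.
  apply is_C_derive_quadratic with 1 0; [lra |]. intros w _.
  replace (w - z - (w - z) * 1)%C with (RtoC 0) by ring. rewrite Cmod_0. lra.
Qed.

Lemma is_C_derive_scal (k : C) (g : C -> C) (z l : C) :
  is_C_derive g z l -> is_C_derive (fun w => k * g w)%C z (k * l)%C.
Proof.
  intro H. apply (filterdiff_ext_lin _ (fun y : C_AbsRing => scal k (scal y l : C_NormedModule))).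
  - exact (filterdiff_scal_r_fct (U := AbsRing_NormedModule C_AbsRing) (V := C_NormedModule)
             k g _ Cmult_comm H).
  - intro y. change (k * (y * l) = y * (k * l))%C. ring.
Qed.

Lemma is_derive_CPSeries (c : nat -> C) (rho : R) (z : C) :
  bounded_coef c rho -> Cmod z < rho -> is_C_derive (CPSeries c) z (CPSeries (CPS_derive c) z).
Proof.
  intros Hc Hz. pose proof (Cmod_ge_0 z).
  set (r := (Cmod z + rho) / 2). assert (Hr : Cmod z < r < rho) by (unfold r; lra).
  destruct (ex_series_derive_majorant c rho r Hc ltac:(lra)) as [T HT].
  apply is_C_derive_quadratic with (d := r - Cmod z) (K := T / r); [lra |].
  intros w Hw. set (D := Cmod (w - z)) in *.
  assert (Hwr : Cmod w < r).
  { pose proof (Cmod_triangle z (w - z)) as Htri.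
    replace (z + (w - z))%C with w in Htri by ring. fold D in Htri. lra. }
  assert (Hrem : is_Cseries (fun n => c (S n) * (w ^ S n - z ^ S n - INR (S n) * (w - z) * z ^ n))%C
                   (CPSeries c w - CPSeries c z - (w - z) * CPSeries (CPS_derive c) z)%C).
  { pose proof (is_Cseries_shift _ _ (is_Cseries_CPSeries c rho w Hc ltac:(lra))) as Hw'.
    pose proof (is_Cseries_shift _ _ (is_Cseries_CPSeries c rho z Hc Hz)) as Hz'.
    pose proof (is_Cseries_CPS_derive c rho z Hc Hz) as Hd.
    refine (is_Cseries_ext _ _ _ _ _ _
              (is_Cseries_minus _ _ _ _ (is_Cseries_minus _ _ _ _ Hw' Hz') (is_Cseries_scal (w - z) _ _ Hd)));
      [intro n; unfold CPS_derive | ]; simpl; ring. }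
  replace (T / r * D ^ 2) with (D ^ 2 / r * T) by (field; lra).
  apply (Cmod_Cseries_le _ _ _ _ Hrem
           (is_series_scal_l (K := R_AbsRing) (V := R_NormedModule) (D ^ 2 / r) _ _ HT)).
  intro n. change (Cmod (c (S n) * (w ^ S n - z ^ S n - INR (S n) * (w - z) * z ^ n))
                   <= D ^ 2 / r * ((INR n + 1) ^ 2 * (Cmod (c (S n)) * r ^ n))).
  rewrite Cmod_mult. pose proof (Cmod_ge_0 (c (S n))).
  pose proof (Cpow_remainder_le w z r n ltac:(lra) ltac:(lra)) as HE. fold D in HE.
  apply Rmult_le_reg_l with r; [lra |].
  replace (r * (D ^ 2 / r * ((INR n + 1) ^ 2 * (Cmod (c (S n)) * r ^ n))))
    with (Cmod (c (S n)) * ((INR n + 1) ^ 2 * D ^ 2 * r ^ n)) by (field; lra).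
  rewrite <- Rmult_assoc, (Rmult_comm r), Rmult_assoc.
  apply Rmult_le_compat_l; assumption.
Qed.

(** * Cauchy's estimate *)

Definition cis (x : R) : C := (cos x, sin x).

Lemma Cmod_cis (x : R) : Cmod (cis x) = 1.
Proof.
  unfold Cmod, cis. cbn [fst snd].
  rewrite <- sqrt_1. f_equal. rewrite <- (sin2_cos2 x). unfold Rsqr. ring.
Qed.

Lemma cis_pow (x : R) (n : nat) : (cis x ^ n)%C = cis (INR n * x).
Proof.
  induction n as [|n IH].
  - unfold cis. simpl. rewrite Rmult_0_l, cos_0, sin_0. reflexivity.
  - rewrite Cpow_S, IH, S_INR. unfold cis, Cmult. cbn [fst snd].
    replace ((INR n + 1) * x) with (x + INR n * x) by ring.
    rewrite cos_plus, sin_plus. f_equal; ring.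
Qed.

Definition unit_root (N : nat) : C := cis (2 * PI / INR N).

Lemma Cmod_unit_root_pow (N p : nat) : Cmod (unit_root N ^ p) = 1.
Proof. rewrite Cmod_pow. unfold unit_root. rewrite Cmod_cis. apply pow1. Qed.

Lemma unit_root_pow_N (N : nat) : (0 < N)%nat -> (unit_root N ^ N)%C = 1.
Proof.
  intro HN. unfold unit_root. rewrite cis_pow.
  replace (INR N * (2 * PI / INR N)) with (2 * PI) by (field; apply not_0_INR; lia).
  unfold cis. rewrite cos_2PI, sin_2PI. reflexivity.
Qed.

Lemma unit_root_pow_neq1 (N p : nat) : (0 < p < N)%nat -> (unit_root N ^ p)%C <> 1.
Proof.
  intros Hp E. unfold unit_root in E. rewrite cis_pow in E.
  apply (f_equal fst) in E. cbn [fst cis] in E.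
  assert (HN : 0 < INR N) by (apply lt_0_INR; lia).
  assert (Hp0 : 0 < INR p) by (apply lt_0_INR; lia).
  assert (HpN : INR p < INR N) by (apply lt_INR; lia).
  set (y := INR p * PI / INR N).
  replace (INR p * (2 * PI / INR N)) with (2 * y) in E by (unfold y; field; lra).
  assert (Hy : 0 < sin y).
  { pose proof PI_RGT_0. apply sin_gt_0; unfold y.
    - apply Rdiv_lt_0_compat; nra.
    - apply Rmult_lt_reg_r with (INR N); [lra |].
      unfold Rdiv. rewrite Rmult_assoc, Rinv_l; nra. }
  rewrite cos_2a_sin in E. simpl in E. nra.
Qed.

Fixpoint Csum (u : nat -> C) (N : nat) : C :=
  match N with O => RtoC 0 | S m => (Csum u m + u m)%C end.

Lemma Csum_ext (u v : nat -> C) (N : nat) :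
  (forall j, (j < N)%nat -> u j = v j) -> Csum u N = Csum v N.
Proof. induction N as [|N IH]; intro H; simpl; [reflexivity |]. rewrite IH, H; auto. Qed.

Lemma Csum_scal (x : C) (u : nat -> C) (N : nat) :
  Csum (fun j => x * u j)%C N = (x * Csum (fun j => u j) N)%C.
Proof. induction N as [|N IH]; simpl; [| rewrite IH]; ring. Qed.

Lemma Cmod_Csum_avg_le (u : nat -> C) (N : nat) (M : R) :
  (0 < N)%nat -> (forall j, Cmod (u j) <= M) -> Cmod (RtoC (/ INR N) * Csum u N) <= M.
Proof.
  intros HN H. assert (HN' : 0 < INR N) by (apply lt_0_INR; lia).
  assert (Hsum : Cmod (Csum u N) <= INR N * M).
  { clear HN HN'. induction N as [|N IH]; simpl Csum.
    - rewrite Cmod_0. simpl. lra.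
    - eapply Rle_trans; [apply Cmod_triangle |]. rewrite S_INR. specialize (H N). lra. }
  rewrite Cmod_mult, Cmod_R, Rabs_pos_eq by (apply Rlt_le, Rinv_0_lt_compat; lra).
  apply Rmult_le_reg_l with (INR N); [lra |]. rewrite <- Rmult_assoc, Rinv_r; lra.
Qed.

Lemma Csum_geom (x : C) (N : nat) : ((x - 1) * Csum (fun j => x ^ j) N = x ^ N - 1)%C.
Proof. induction N as [|N IH]; simpl; [| rewrite Cmult_plus_distr_l, IH]; ring. Qed.

Lemma is_Cseries_Csum (F : nat -> nat -> C) (L : nat -> C) (N : nat) :
  (forall j, is_Cseries (F j) (L j)) -> is_Cseries (fun n => Csum (fun j => F j n) N) (Csum L N).
Proof.
  intro H. induction N as [|N IH]; simpl; [apply is_Cseries_0 | exact (is_Cseries_plus _ _ _ _ IH (H N))].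
Qed.

Definition root_avg (N m : nat) : C :=
  (RtoC (/ INR N) * Csum (fun j => (unit_root N ^ m) ^ j) N)%C.

Lemma Cmod_root_avg_le (N m : nat) : (0 < N)%nat -> Cmod (root_avg N m) <= 1.
Proof.
  intro HN. apply Cmod_Csum_avg_le; [exact HN |].
  intro j. rewrite <- Cpow_mult_r, Cmod_unit_root_pow. lra.
Qed.

Lemma root_avg_N (N : nat) : (0 < N)%nat -> root_avg N N = 1.
Proof.
  intro HN. unfold root_avg. rewrite unit_root_pow_N by exact HN.
  rewrite (Csum_ext _ (fun _ => 1)) by (intros; apply Cpow_1_l).
  assert (Hsum : forall M, Csum (fun _ => 1) M = RtoC (INR M)).
  { induction M as [|M IH]; simpl Csum; [reflexivity |]. rewrite IH, S_INR, RtoC_plus. reflexivity. }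
  rewrite Hsum, <- RtoC_mult, Rinv_l by (apply not_0_INR; lia). reflexivity.
Qed.

Lemma root_avg_eq0 (N m : nat) : (0 < m < 2 * N)%nat -> m <> N -> root_avg N m = 0.
Proof.
  intros Hm HmN. set (x := (unit_root N ^ m)%C).
  assert (Hx1 : x <> 1).
  { unfold x. destruct (Nat.lt_ge_cases m N).
    - apply unit_root_pow_neq1. lia.
    - replace m with (N + (m - N))%nat by lia.
      rewrite Cpow_add_r, unit_root_pow_N, Cmult_1_l by lia. apply unit_root_pow_neq1. lia. }
  assert (HxN : (x ^ N)%C = 1).
  { unfold x. rewrite <- Cpow_mult_r, Nat.mul_comm, Cpow_mult_r, unit_root_pow_N by lia. apply Cpow_1_l. }
  assert (Hgeom : ((x - 1) * Csum (fun j => x ^ j) N = 0)%C) by (rewrite Csum_geom, HxN; ring).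
  assert (Hx1' : (x - 1)%C <> 0)
    by (intro E; apply Hx1; replace x with (x - 1 + 1)%C by ring; rewrite E; ring).
  unfold root_avg. fold x.
  replace (Csum (fun j => x ^ j)%C N) with (/ (x - 1) * ((x - 1) * Csum (fun j => x ^ j) N))%C
    by (field; exact Hx1').
  rewrite Hgeom. ring.
Qed.

Lemma sum_n_single (b : nat -> C) (k m : nat) :
  (forall n, (n <= m)%nat -> n <> k -> b n = 0) -> sum_n b m = if (k <=? m)%nat then b k else RtoC 0.
Proof.
  induction m as [|m IH]; intro Hb.
  - rewrite sum_O. destruct k; [reflexivity | apply Hb; lia].
  - rewrite sum_Sn, IH by (intros; apply Hb; lia).
    match goal with |- plus ?x ?y = ?z => change (x + y = z)%C end.
    destruct (Nat.eq_dec (S m) k) as [<- | Hk].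
    + rewrite Nat.leb_refl, (proj2 (Nat.leb_gt _ _)) by lia. ring.
    + rewrite (Hb (S m)) by lia.
      destruct (Nat.leb_spec k m), (Nat.leb_spec k (S m)); try lia; ring.
Qed.

(* [unit_root N ^ (j * (N - k))] stands for [unit_root N ^ (- j * k)]. *)
Definition cauchy_sum (c : nat -> C) (r : R) (N k : nat) : C :=
  (RtoC (/ INR N) * Csum (fun j => unit_root N ^ (j * (N - k)) * CPSeries c (r * unit_root N ^ j)) N)%C.

Lemma Cmod_scal_unit_root_pow (r : R) (N j : nat) : 0 <= r -> Cmod (r * unit_root N ^ j) = r.
Proof. intro Hr. rewrite Cmod_mult, Cmod_unit_root_pow, Cmod_R, Rabs_pos_eq; lra. Qed.

Lemma Cmod_cauchy_sum_le (c : nat -> C) (r M : R) (N k : nat) :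
  (0 < N)%nat -> 0 <= r -> (forall z, Cmod z = r -> Cmod (CPSeries c z) <= M) ->
  Cmod (cauchy_sum c r N k) <= M.
Proof.
  intros HN Hr HM. apply Cmod_Csum_avg_le; [exact HN |].
  intro j. rewrite Cmod_mult, Cmod_unit_root_pow, Rmult_1_l.
  apply HM, Cmod_scal_unit_root_pow, Hr.
Qed.

Lemma is_Cseries_cauchy_sum (c : nat -> C) (r : R) (N k : nat) :
  (k < N)%nat -> 0 <= r ->
  (forall z, Cmod z = r -> is_Cseries (fun n => c n * z ^ n)%C (CPSeries c z)) ->
  is_Cseries (fun n => c n * r ^ n * root_avg N (n + N - k))%C (cauchy_sum c r N k).
Proof.
  intros Hk Hr Hc.
  refine (is_Cseries_ext _ _ _ _ _ eq_refl
            (is_Cseries_scal _ _ _ (is_Cseries_Csum _ _ N (fun j => is_Cseries_scal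
               (unit_root N ^ (j * (N - k))) _ _ (Hc _ (Cmod_scal_unit_root_pow r N j Hr)))))).
  intro n. unfold root_avg.
  rewrite (Csum_ext _ (fun j => c n * r ^ n * (unit_root N ^ (n + N - k)) ^ j)%C), Csum_scal; [ring |].
  intros j _. rewrite Cpow_mult_l, <- !Cpow_mult_r.
  replace ((n + N - k) * j)%nat with (j * (N - k) + j * n)%nat by nia.
  rewrite Cpow_add_r. ring.
Qed.

Lemma is_Cseries_cauchy_sum_tail (c : nat -> C) (r : R) (N k : nat) :
  (k < N)%nat -> 0 <= r ->
  (forall z, Cmod z = r -> is_Cseries (fun n => c n * z ^ n)%C (CPSeries c z)) ->
  is_Cseries (fun m => c (N + m)%nat * r ^ (N + m) * root_avg N (N + m + N - k))%C
    (cauchy_sum c r N k - c k * r ^ k)%C.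
Proof.
  intros Hk Hr Hc.
  apply (is_series_incr_n (fun n => c n * r ^ n * root_avg N (n + N - k))%C N); [lia |].
  rewrite (sum_n_single _ k) by (intros n Hn Hnk; rewrite root_avg_eq0 by lia; ring).
  rewrite (proj2 (Nat.leb_le k (pred N))) by lia.
  replace (k + N - k)%nat with N by lia. rewrite root_avg_N by lia.
  match goal with |- is_series _ ?l => replace l with (cauchy_sum c r N k) by (cbn; ring) end.
  exact (is_Cseries_cauchy_sum c r N k Hk Hr Hc).
Qed.

Lemma Cauchy_estimate (c : nat -> C) (r M : R) :
  0 < r -> ex_series (fun n => Cmod (c n) * r ^ n) ->
  (forall z, Cmod z = r -> Cmod (CPSeries c z) <= M) ->
  forall k, Cmod (c k) * r ^ k <= M.
Proof.
  intros Hr [W HW] HM k. apply le_epsilon. intros eps Heps.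
  set (w := fun n => Cmod (c n) * r ^ n) in HW.
  destruct (proj2 (is_lim_seq_spec (sum_n w) W) HW (mkposreal eps Heps)) as [N0 HN0].
  set (N := S (Nat.max N0 k)).
  assert (Hconv : forall z, Cmod z = r -> is_Cseries (fun n => c n * z ^ n)%C (CPSeries c z)).
  { intros z Hz. apply is_Cseries_CPSeries_abs. rewrite Hz. exists W. exact HW. }
  assert (Hwtail : is_series (fun m => w (N + m)%nat) (W - sum_n w (pred N))).
  { apply is_series_incr_n; [lia |].
    match goal with |- is_series _ ?l => replace l with W by (cbn; lra) end. exact HW. }
  assert (Hsmall : Cmod (cauchy_sum c r N k - c k * r ^ k) <= eps).
  { apply Rle_trans with (W - sum_n w (pred N)).
    - refine (Cmod_Cseries_le _ _ _ _ (is_Cseries_cauchy_sum_tail c r N k _ _ Hconv) Hwtail _);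
        [lia | lra | intro m; unfold w].
      rewrite !Cmod_mult, Cmod_pow, Cmod_R, Rabs_pos_eq by lra.
      pose proof (Cmod_root_avg_le N (N + m + N - k) ltac:(lia)).
      assert (0 <= Cmod (c (N + m)%nat) * r ^ (N + m))
        by (apply Rmult_le_pos; [apply Cmod_ge_0 | apply pow_le; lra]).
      nra.
    - specialize (HN0 (pred N) ltac:(lia)). change (Rabs (sum_n w (pred N) - W) < eps) in HN0.
      apply Rabs_def2 in HN0. lra. }
  pose proof (Cmod_cauchy_sum_le c r M N k ltac:(lia) ltac:(lra) HM).
  set (A := cauchy_sum c r N k) in *.
  replace (Cmod (c k) * r ^ k) with (Cmod (A - (A - c k * r ^ k)))
    by (replace (A - (A - c k * r ^ k))%C with (c k * r ^ k)%C by ring;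
        rewrite Cmod_mult, Cmod_pow, Cmod_R, Rabs_pos_eq; lra).
  eapply Rle_trans; [apply Cmod_triangle | rewrite Cmod_opp; lra].
Qed.

Lemma le_of_forall_pow_le (x L : R) (m : nat) :
  (forall r, 0 < r < 1 -> x * r ^ m <= L) -> x <= L.
Proof.
  intro H. set (u := fun n => 1 - (/ 2) ^ S n).
  assert (Hu : is_lim_seq u 1).
  { replace (Finite 1) with (Rbar_minus 1 0) by (simpl; f_equal; ring).
    apply is_lim_seq_minus'; [apply is_lim_seq_const |].
    apply (is_lim_seq_incr_1 (fun n => (/ 2) ^ n)), is_lim_seq_geom.
    rewrite Rabs_pos_eq; lra. }
  assert (Hxu : is_lim_seq (fun n => x * u n ^ m) (x * 1 ^ m))
    by (apply (is_lim_seq_continuous (fun r => x * r ^ m)); [reg | exact Hu]).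
  rewrite pow1, Rmult_1_r in Hxu.
  assert (Hu01 : forall n, 0 < u n < 1).
  { intro n. unfold u. pose proof (pow_lt (/ 2) (S n) ltac:(lra)).
    pose proof (pow_lt_1_compat (/ 2) (S n) ltac:(lra) ltac:(lia)). lra. }
  exact (is_lim_seq_le _ _ x L (fun n => H (u n) (Hu01 n)) Hxu (is_lim_seq_const L)).
Qed.

(** * The class Ω_λ *)

Definition tail_coef (a : nat -> C) (n : nat) : C := if (n <? 2)%nat then RtoC 0 else a n.

Definition defect_coef (a : nat -> C) (n : nat) : C := (INR (S n) * a (S (S n)))%C.

Lemma is_Cseries_defect (a : nat -> C) (z P D : C) :
  is_Cseries (fun n => tail_coef a n * z ^ n)%C P ->
  is_Cseries (fun n => CPS_derive (tail_coef a) n * z ^ n)%C D ->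
  is_Cseries (fun n => z ^ 2 * (defect_coef a n * z ^ n))%C (z * D - P)%C.
Proof.
  intros HP HD.
  refine (is_Cseries_ext _ _ _ _ _ _
            (is_Cseries_shift _ _
               (is_Cseries_minus _ _ _ _ (is_Cseries_scal z _ _ HD) (is_Cseries_shift _ _ HP))));
    [intro n |]; unfold CPS_derive, defect_coef, tail_coef; simpl; [rewrite RtoC_plus |]; ring.
Qed.

Lemma inD_locally (z : C) : inD z -> locally (T := AbsRing_UniformSpace C_AbsRing) z inD.
Proof.
  unfold inD. intro Hz. apply (locally_le_locally_norm (K := C_AbsRing) (V := AbsRing_NormedModule C_AbsRing)).
  assert (Hd : 0 < 1 - Cmod z) by lra.
  exists (mkposreal _ Hd). intros t Ht. change C in t. change (Cmod (t - z) < 1 - Cmod z) in Ht.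
  pose proof (Cmod_triangle z (t - z)) as Htri. replace (z + (t - z))%C with t in Htri by ring. lra.
Qed.

Lemma has_expansion_series (f : C -> C) (a : nat -> C) (z : C) :
  has_expansion f a -> inD z -> is_Cseries (fun n => tail_coef a n * z ^ n)%C (f z - z)%C.
Proof.
  intros H Hz. refine (is_Cseries_ext _ _ _ _ _ eq_refl (H z Hz)).
  intro n. unfold tail_coef. destruct (n <? 2)%nat; [ring | reflexivity].
Qed.

Lemma has_expansion_eq (f : C -> C) (a : nat -> C) (z : C) :
  has_expansion f a -> inD z -> f z = (z + CPSeries (tail_coef a) z)%C.
Proof. intros H Hz. unfold CPSeries. rewrite (CSeries_unique _ _ (has_expansion_series f a z H Hz)). ring. Qed.

Lemma has_expansion_bounded (f : C -> C) (a : nat -> C) (r : R) :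
  has_expansion f a -> 0 <= r < 1 -> bounded_coef (tail_coef a) r.
Proof.
  intros H Hr. replace r with (Cmod (RtoC r)) by (rewrite Cmod_R; apply Rabs_pos_eq; lra).
  apply bounded_coef_of_is_Cseries with (f r - r)%C, has_expansion_series; [exact H |].
  unfold inD. rewrite Cmod_R, Rabs_pos_eq; lra.
Qed.

Lemma has_expansion_derive (f : C -> C) (a : nat -> C) (z : C) :
  has_expansion f a -> inD z -> is_C_derive f z (1 + CPSeries (CPS_derive (tail_coef a)) z)%C.
Proof.
  intros H Hz.
  apply is_derive_ext_loc with (fun t => t + CPSeries (tail_coef a) t)%C.
  - apply filter_imp with inD; [| exact (inD_locally z Hz)].
    intros t Ht. symmetry. exact (has_expansion_eq f a t H Ht).
  - unfold inD in Hz. pose proof (Cmod_ge_0 z).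
    refine (is_derive_plus (V := C_NormedModule) (fun t => t) (CPSeries (tail_coef a)) z (RtoC 1) _
              (is_C_derive_id z) _).
    apply is_derive_CPSeries with ((Cmod z + 1) / 2); [apply has_expansion_bounded with f |]; auto; lra.
Qed.

Lemma has_expansion_defect (f : C -> C) (a : nat -> C) (z l : C) :
  has_expansion f a -> inD z -> is_C_derive f z l ->
  is_Cseries (fun n => z ^ 2 * (defect_coef a n * z ^ n))%C (z * l - f z)%C.
Proof.
  intros H Hz Hl.
  assert (El : l = (1 + CPSeries (CPS_derive (tail_coef a)) z)%C).
  { rewrite <- (is_C_derive_unique _ _ _ Hl). apply is_C_derive_unique, has_expansion_derive; assumption. }
  unfold inD in Hz. pose proof (Cmod_ge_0 z).
  assert (HD : is_Cseries (fun n => CPS_derive (tail_coef a) n * z ^ n)%C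
                 (CPSeries (CPS_derive (tail_coef a)) z)).
  { apply is_Cseries_CPS_derive with ((Cmod z + 1) / 2); [apply has_expansion_bounded with f |]; auto; lra. }
  refine (is_Cseries_ext _ _ _ _ (fun n => eq_refl) _
            (is_Cseries_defect a z _ _ (has_expansion_series f a z H Hz) HD)).
  rewrite El. ring.
Qed.

Lemma is_series_Cmod_defect_coef (a : nat -> C) (s : R) :
  is_series (fun k => if (k <? 2)%nat then 0 else (INR k - 1) * Cmod (a k)) s ->
  is_series (fun n => Cmod (defect_coef a n)) s.
Proof.
  set (t := fun k => if (k <? 2)%nat then 0 else (INR k - 1) * Cmod (a k)). intro Hs.
  assert (Ht : is_series (fun n => t (S (S n))) s).
  { apply (is_series_incr_1 (fun n => t (S n))), (is_series_incr_1 t).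
    match goal with |- is_series _ ?l => replace l with s by (cbn; lra) end. exact Hs. }
  refine (is_series_ext _ _ _ _ Ht). intro n.
  unfold t, defect_coef. rewrite Cmod_mult, Cmod_R, Rabs_pos_eq, (S_INR (S n)) by apply pos_INR.
  simpl. ring.
Qed.

Lemma Omega_of_coef_sum_lt (lam s : R) (f : C -> C) (a : nat -> C) :
  analytic_on_D f -> has_expansion f a ->
  is_series (fun k => if (k <? 2)%nat then 0 else (INR k - 1) * Cmod (a k)) s -> s < lam ->
  Omega lam f.
Proof.
  intros Hf Hexp Hs Hslam.
  pose proof (is_series_Cmod_defect_coef a s Hs) as Hd.
  pose proof (bounded_coef_of_is_series_Cmod _ s Hd) as Hbd.
  assert (Hlam : 0 < lam).
  { pose proof (is_series_term_le _ _ O (fun n => Cmod_ge_0 _) Hd).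
    pose proof (Cmod_ge_0 (defect_coef a O)). lra. }
  assert (H0 : inD 0) by (unfold inD; rewrite Cmod_0; lra).
  assert (Htail0 : CPSeries (tail_coef a) 0 = 0) by (apply CPSeries_0; reflexivity).
  split; [exact Hf |]. split; [rewrite (has_expansion_eq f a 0 Hexp H0), Htail0; ring |]. split.
  { replace (RtoC 1) with (1 + CPSeries (CPS_derive (tail_coef a)) 0)%C
      by (rewrite CPSeries_0 by (unfold CPS_derive, tail_coef; simpl; ring); ring).
    exact (has_expansion_derive f a 0 Hexp H0). }
  exists (fun z => RtoC (/ lam) * CPSeries (defect_coef a) z)%C. split; [| split].
  - intros z Hz. eexists. apply is_C_derive_scal, (is_derive_CPSeries _ 1 z Hbd Hz).
  - intros z Hz. pose proof (Cmod_CPSeries_le _ s z Hd Hz).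
    rewrite Cmod_mult, Cmod_R, Rabs_pos_eq by (apply Rlt_le, Rinv_0_lt_compat; lra).
    apply Rmult_le_reg_l with lam; [lra |]. rewrite <- Rmult_assoc, Rinv_r; lra.
  - intros z Hz l Hl.
    apply (is_Cseries_unique _ _ _ (has_expansion_defect f a z l Hexp Hz Hl)).
    refine (is_Cseries_ext _ _ _ _ (fun n => eq_refl) _
              (is_Cseries_scal (z ^ 2) _ _ (is_Cseries_CPSeries _ 1 z Hbd Hz))).
    cbv beta. rewrite RtoC_inv by lra. field. intro E. apply RtoC_inj in E. lra.
Qed.

Lemma Omega_defect_bound (lam : R) (f : C -> C) (a : nat -> C) (z : C) :
  0 <= lam -> has_expansion f a -> Omega lam f -> inD z -> z <> 0 ->
  is_Cseries (fun n => defect_coef a n * z ^ n)%C (CPSeries (defect_coef a) z) /\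
  Cmod (CPSeries (defect_coef a) z) <= lam.
Proof.
  intros Hlam Hexp [_ [_ [_ [phi [_ [Hphi Hid]]]]]] Hz Hz0.
  pose proof (has_expansion_derive f a z Hexp Hz) as Hl.
  pose proof (is_Cseries_scal (/ z ^ 2) _ _ (has_expansion_defect f a z _ Hexp Hz Hl)) as H.
  rewrite (Hid z Hz _ Hl) in H. pose proof (Cpow_nz z 2 Hz0).
  assert (Hdef : is_Cseries (fun n => defect_coef a n * z ^ n)%C (lam * phi z)%C)
    by (refine (is_Cseries_ext _ _ _ _ _ _ H); [intro n |]; field; assumption).
  unfold CPSeries. rewrite (CSeries_unique _ _ Hdef). split; [exact Hdef |].
  rewrite Cmod_mult, Cmod_R, Rabs_pos_eq by exact Hlam.
  pose proof (Hphi z Hz). pose proof (Cmod_ge_0 (phi z)). nra.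
Qed.

Lemma Omega_coef_le (lam : R) (f : C -> C) (a : nat -> C) :
  0 <= lam -> has_expansion f a -> Omega lam f ->
  forall k, (2 <= k)%nat -> Cmod (a k) <= lam / (INR k - 1).
Proof.
  intros Hlam Hexp HOmega k Hk.
  assert (Hcircle : forall r, 0 < r < 1 -> Cmod (defect_coef a (k - 2)) * r ^ (k - 2) <= lam).
  { intros r Hr. apply Cauchy_estimate; [lra | |].
    - set (r' := (r + 1) / 2). apply ex_series_Cmod_pser with r'; [| unfold r'; lra].
      replace r' with (Cmod (RtoC r')) by (rewrite Cmod_R; apply Rabs_pos_eq; unfold r'; lra).
      apply bounded_coef_of_is_Cseries with (CPSeries (defect_coef a) r'), (Omega_defect_bound lam f);
        try assumption.
      + unfold inD. rewrite Cmod_R, Rabs_pos_eq; unfold r'; lra.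
      + intro E. apply RtoC_inj in E. unfold r' in E. lra.
    - intros z Hz. apply (Omega_defect_bound lam f); try assumption.
      + unfold inD. lra.
      + intro E. rewrite E, Cmod_0 in Hz. lra. }
  apply le_of_forall_pow_le in Hcircle.
  unfold defect_coef in Hcircle. replace (S (S (k - 2))) with k in Hcircle by lia.
  rewrite Cmod_mult, Cmod_R, Rabs_pos_eq in Hcircle by apply pos_INR.
  replace (INR (S (k - 2))) with (INR k - 1) in Hcircle
    by (rewrite S_INR, minus_INR by lia; simpl; ring).
  assert (Hk1 : 1 < INR k) by (apply (lt_INR 1); lia).
  apply Rmult_le_reg_l with (INR k - 1); [lra |].
  unfold Rdiv. rewrite (Rmult_comm lam), <- Rmult_assoc, Rinv_r; lra.
Qed.

Theorem theorem4p6 (lam : R) (Hlam : 0 < lam) :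
  (forall (f : C -> C) (a : nat -> C),
     analytic_on_D f -> has_expansion f a ->
     (exists s : R,
        is_series (fun k => if (k <? 2)%nat then 0 else (INR k - 1) * Cmod (a k)) s
        /\ s < lam) ->
     Omega lam f) /\
  (forall (f : C -> C) (a : nat -> C),
     has_expansion f a -> Omega lam f ->
     forall k : nat, (2 <= k)%nat -> Cmod (a k) <= lam / (INR k - 1)).
Proof.
  split.
  - intros f a Hf Hexp [s [Hs Hslam]]. exact (Omega_of_coef_sum_lt lam s f a Hf Hexp Hs Hslam).
  - intros f a Hexp HOmega. exact (Omega_coef_le lam f a (Rlt_le _ _ Hlam) Hexp HOmega).
Qed.
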